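(* Let $\boldsymbol Z$ be an integrable random vector in $\mathbb R^d$ whose distribution is invariant under all orthogonal transformations, and let $W$ be a discrete random variable jointly distributed with $\boldsymbol Z$. Then for every $w$ in the support of $W$ and every real $\theta$, $$\big\|\mathbb E(\boldsymbol Z\mathbf 1_{W=w})\big\|^2\le\big[\theta\,\mathbb P(W=w)+\mathbb E(Z_1-\theta)_+\big]^2,$$ where $Z_1$ is the first coordinate of $\boldsymbol Z$ and $x_+=\max(x,0)$. *)

From HB Require Import structures.
From mathcomp Require Import all_boot all_order all_algebra.
From mathcomp Require Import all_classical all_reals all_analysis.
Set Implicit Arguments. Unset Strict Implicit. Unset Printing Implicit Defensive.
Import Order.TTheory GRing.Theory Num.Theory.
Local Open Scope ring_scope.

Definition orthogonal_mx (R : realType) (d : nat) (Q : 'M[R]_d) : Prop :=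
  Q^T *m Q = 1%:M.

(* The linear action x |-> Q x of a matrix on vectors of R^d, where vectors of
   R^d are represented as d-tuples (which carry the product sigma-algebra). *)
Definition mx_act (R : realType) (d : nat) (Q : 'M[R]_d) (x : d.-tuple R)
  : d.-tuple R := [tuple \sum_(j < d) Q i j * tnth x j | i < d].

Definition enorm (R : realType) (d : nat) (x : d.-tuple R) : R :=
  Num.sqrt (\sum_(i < d) tnth x i ^+ 2).

From HB Require Import structures.
From mathcomp Require Import all_boot all_order all_algebra.
From mathcomp Require Import all_classical all_reals all_analysis.
From mathcomp Require Import measurable_realfun ring lra.
Import Order.TTheory GRing.Theory Num.Theory.
Local Open Scope classical_set_scope.
Local Open Scope ring_scope.

(* Let v = E(Z 1_A) with A = {W = w}, and s = |v|.  If s = 0 there is nothing to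
   prove.  Otherwise u = v / s is a unit vector with <u, v> = s, and u is the
   first row of an orthogonal matrix Q (a Householder reflection).  Then
     s = <u, E(Z 1_A)> = E(<u,Z> 1_A) <= theta P(A) + E(<u,Z> - theta)_+,
   by the pointwise estimate x 1_A <= theta 1_A + (x - theta)_+, and since
   <u, Z> = (QZ)_1 has the law of Z_1 by orthogonal invariance,
   E(<u,Z> - theta)_+ = E(Z_1 - theta)_+. *)

Section Householder.
Context {R : realType} {d : nat}.

(* The Householder reflection along w: it is orthogonal (the identity when w = 0). *)
Definition householder (w : 'cV[R]_d) : 'M[R]_d :=
  1%:M - (2 / \sum_i w i 0 ^+ 2) *: (w *m w^T).

Lemma householder_orthogonal (w : 'cV[R]_d) : orthogonal_mx (householder w).
Proof.
rewrite /orthogonal_mx /householder.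
set n := \sum_i w i 0 ^+ 2; set c := 2 / n.
have wTw : w^T *m w = n%:M.
  rewrite [LHS]mx11_scalar mxE; congr (_%:M).
  by apply: eq_bigr => i _; rewrite !mxE expr2.
have idem : (w *m w^T) *m (w *m w^T) = n *: (w *m w^T).
  by rewrite mulmxA -(mulmxA w) wTw mul_mx_scalar scalemxAl.
have cc : c * c * n = 2 * c.
  have [n0|n0] := eqVneq n 0; first by rewrite /c n0 invr0 !mulr0.
  by rewrite /c; field.
have -> : (1%:M - c *: (w *m w^T))^T = 1%:M - c *: (w *m w^T).
  by rewrite linearB linearZ /= trmx1 trmx_mul trmxK.
rewrite mulmxBl !mulmxBr !mul1mx mulmx1 -scalemxAl -scalemxAr idem !scalerA cc.
(* Entrywise, with the Kronecker symbol kept abstract for ring. *)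
apply/matrixP => i j; rewrite !mxE big_ord1 !mxE.
by set e := (i == j)%:R; ring.
Qed.

(* Every unit vector u is the i0-th row of some orthogonal matrix: reflect e_i0 onto u. *)
Lemma orthogonal_with_row (i0 : 'I_d) (u : 'I_d -> R) :
  \sum_i u i ^+ 2 = 1 ->
  exists Q : 'M[R]_d, orthogonal_mx Q /\ forall j, Q i0 j = u j.
Proof.
move=> unit_u; pose w : 'cV[R]_d := \col_i ((i == i0)%:R - u i).
exists (householder w); split; first exact: householder_orthogonal.
have wE k : w k 0 = (k == i0)%:R - u k by rewrite mxE.
have nE : \sum_i w i 0 ^+ 2 = 2 * w i0 0.
  rewrite (bigD1 i0) //= wE eqxx (eq_bigr (fun i => u i ^+ 2)); last first.
    by move=> i /negbTE ni0; rewrite wE ni0 sub0r sqrrN.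
  move: unit_u; rewrite (bigD1 i0) //= => unit_u.
  have -> : \sum_(i | i != i0) u i ^+ 2 = 1 - u i0 ^+ 2 by rewrite -unit_u; ring.
  ring.
move=> j; rewrite /householder !mxE big_ord1 !mxE -!wE nE.
have uE : u j = (i0 == j)%:R - w j 0 by rewrite wE eq_sym; ring.
have [w0|w0] := eqVneq (w i0 0) 0; last by rewrite uE; field.
have wj0 : w j 0 = 0.
  apply/eqP; rewrite -sqrf_eq0; apply/eqP.
  apply: (@psumr_eq0P _ _ predT (fun k => w k 0 ^+ 2)) => //.
    by move=> k _; exact: sqr_ge0.
  by rewrite nE w0 mulr0.
by rewrite uE wj0 w0; ring.
Qed.

End Householder.

Lemma measurable_mx_act (R : realType) (d : nat) (Q : 'M[R]_d) :
  measurable_fun setT (mx_act Q).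
Proof.
apply/measurable_fun_tnthP => i.
have -> : (tnth (T:=R))^~ i \o mx_act Q = (fun x => \sum_(j < d) Q i j * tnth x j).
  by apply/funext => x; rewrite /comp /mx_act tnth_mktuple.
by apply: measurable_sum => j; apply: measurable_funM => //; exact: measurable_tnth.
Qed.

Lemma tnth_le_enorm (R : realType) (d : nat) (x : d.-tuple R) (i : 'I_d) :
  `|tnth x i| <= enorm x.
Proof.
rewrite /enorm -sqrtr_sqr ler_wsqrtr // (bigD1 i) //= ler_wpDr //.
by apply: sumr_ge0 => j _; exact: sqr_ge0.
Qed.

Lemma mul_bool_le_hinge (R : realDomainType) (x theta : R) (b : bool) :
  x * b%:R <= theta * b%:R + Num.max (x - theta) 0.
Proof.
have hinge_ge0 : 0 <= Num.max (x - theta) 0 by rewrite le_max lexx orbT.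
have hinge_ge : x - theta <= Num.max (x - theta) 0 by rewrite le_max lexx.
by case: b; rewrite /= ?mulr1 ?mulr0 ?add0r //; lra.
Qed.

Section FiniteMeasureIntegrals.
Context (dT : measure_display) (T : measurableType dT) (R : realType).
Variable mu : {finite_measure set T -> \bar R}.

Lemma integrable_affine_dominated (g f : T -> R) (a b : R) :
  measurable_fun setT f -> mu.-integrable setT (EFin \o g) ->
  (forall x, `|f x| <= a * g x + b) -> mu.-integrable setT (EFin \o f).
Proof.
move=> mf ig fg.
apply: (@le_integrable _ _ _ _ _ _ _ (EFin \o (fun x => a * g x + b))) => //.
- exact/measurable_EFinP.
- by move=> x _; rewrite /comp !abse_EFin lee_fin (le_trans (fg x)) // ler_norm.
- have -> : EFin \o (fun x => a * g x + b) =
      ((fun x => a%:E * (EFin \o g) x)%E \+ (EFin \o cst b))%E by apply/funext.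
  apply: integrableD => //; last exact: finite_measure_integrable_cst.
  exact: integrableZl.
Qed.

Lemma Rintegral_sum (I : Type) (r : seq I) (F : I -> T -> R) :
  (forall i, mu.-integrable setT (EFin \o F i)) ->
  \int[mu]_x (\sum_(i <- r) F i x) = \sum_(i <- r) \int[mu]_x F i x.
Proof.
move=> iF; elim: r => [|a r IH].
  under eq_Rintegral do rewrite big_nil.
  by rewrite Rintegral_cst // mul0r big_nil.
have isum : mu.-integrable setT (EFin \o (fun x => \sum_(i <- r) F i x)).
  have -> : EFin \o (fun x => \sum_(i <- r) F i x) =
      (fun x => \sum_(i <- r) (EFin \o F i) x)%E.
    by apply/funext => x; rewrite /comp -sumEFin.
  exact: integrable_sum.
under eq_Rintegral do rewrite big_cons.
by rewrite RintegralD // IH big_cons.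
Qed.

End FiniteMeasureIntegrals.

Lemma unit_direction {R : rcfType} {n : nat} (v : 'I_n -> R) :
  let s := Num.sqrt (\sum_i v i ^+ 2) in s != 0 ->
  \sum_i (v i / s) ^+ 2 = 1 /\ \sum_i v i / s * v i = s.
Proof.
move=> s s0; have sq : \sum_i v i ^+ 2 = s ^+ 2.
  by rewrite sqr_sqrtr //; apply: sumr_ge0 => i _; exact: sqr_ge0.
split.
  under eq_bigr do rewrite expr_div_n.
  by rewrite -mulr_suml sq divff // expf_neq0.
under eq_bigr do rewrite mulrAC -expr2.
by rewrite -mulr_suml sq expr2 mulfK.
Qed.

Lemma ge0_integral_same_distribution (dT dV : measure_display)
    (T : measurableType dT) (V : measurableType dV) (R : realType)
    (mu : {measure set T -> \bar R}) (Y Y' : T -> V) (G : V -> \bar R) :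
  measurable_fun setT Y -> measurable_fun setT Y' ->
  (forall B, measurable B -> mu (Y @^-1` B) = mu (Y' @^-1` B)) ->
  measurable_fun setT G -> (forall v, (0 <= G v)%E) ->
  (\int[mu]_x G (Y x) = \int[mu]_x G (Y' x))%E.
Proof.
move=> mY mY' same mG G0.
have G0' : {in setT, forall v, (0 <= G v)%E} by move=> v _.
have := ge0_integral_pushforward mY mu measurableT mG G0'.
have := ge0_integral_pushforward mY' mu measurableT mG G0'.
rewrite !preimage_setT => <- <-.
by apply: eq_measure_integral => B mB _ /=; rewrite /pushforward same.
Qed.

Section ProjectionOnEvent.
Context {dT : measure_display} {T : measurableType dT} {R : realType}.
Context {P : probability T R} {d : nat} {Z : T -> d.-tuple R} {A : set T}.
Hypotheses (mZ : measurable_fun setT Z) (mA : measurable A)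
  (intZ : P.-integrable setT (fun x => (enorm (Z x))%:E)).

Definition along (u : 'I_d -> R) (x : T) : R := \sum_j u j * tnth (Z x) j.

Lemma measurable_coord (i : 'I_d) : measurable_fun setT (fun x => tnth (Z x) i).
Proof. exact: measurableT_comp (measurable_tnth i) mZ. Qed.

Lemma measurable_along (u : 'I_d -> R) : measurable_fun setT (along u).
Proof.
by apply: measurable_sum => j; apply: measurable_funM => //; exact: measurable_coord.
Qed.

Lemma along_le_enorm (u : 'I_d -> R) (x : T) :
  `|along u x| <= (\sum_j `|u j|) * enorm (Z x).
Proof.
rewrite /along mulr_suml; apply: le_trans (ler_norm_sum _ _ _) _.
by apply: ler_sum => j _; rewrite normrM ler_wpM2l // tnth_le_enorm.
Qed.

Lemma integrable_linear_growth (f : T -> R) (K b : R) :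
  measurable_fun setT f -> (forall x, `|f x| <= K * enorm (Z x) + b) ->
  P.-integrable setT (EFin \o f).
Proof. by move=> mf; apply: integrable_affine_dominated mf intZ. Qed.

Lemma integrable_mul_indic (f : T -> R) (K : R) :
  measurable_fun setT f -> (forall x, `|f x| <= K * enorm (Z x)) ->
  P.-integrable setT (EFin \o (fun x => f x * \1_A x)).
Proof.
move=> mf fK; apply: (@integrable_linear_growth _ K 0).
  by apply: measurable_funM => //; exact: measurable_indic.
move=> x; rewrite addr0 normrM indicE (le_trans _ (fK x)) //.
by rewrite ler_piMr //; case: (x \in A); rewrite /= ?normr1 ?normr0.
Qed.

Lemma integrable_coord_indic (i : 'I_d) :
  P.-integrable setT (EFin \o (fun x => tnth (Z x) i * \1_A x)).
Proof.
apply: (@integrable_mul_indic _ 1); first exact: measurable_coord.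
by move=> x; rewrite mul1r tnth_le_enorm.
Qed.

Lemma integral_along_indic (u : 'I_d -> R) :
  \int[P]_x (along u x * \1_A x) = \sum_j u j * \int[P]_x (tnth (Z x) j * \1_A x).
Proof.
rewrite (eq_bigr (fun j => \int[P]_x (u j * (tnth (Z x) j * \1_A x)))); last first.
  by move=> j _; rewrite RintegralZl //; exact: integrable_coord_indic.
rewrite -Rintegral_sum; last first.
  move=> j.
  exact: (eq_integrable _ _ _ _ (integrableZl measurableT (u j) (integrable_coord_indic j))).
by apply: eq_Rintegral => x _; rewrite /along mulr_suml; apply: eq_bigr => j _; rewrite mulrA.
Qed.

Lemma integral_along_indic_le (u : 'I_d -> R) (theta : R) :
  \int[P]_x (along u x * \1_A x)
  <= theta * fine (P A) + \int[P]_x Num.max (along u x - theta) 0.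
Proof.
set K := \sum_j `|u j|.
have K0 : 0 <= K by apply: sumr_ge0 => j _.
have int_hinge : P.-integrable setT (EFin \o (fun x => Num.max (along u x - theta) 0)).
  apply: (@integrable_linear_growth _ K `|theta|).
    by apply: measurable_maxr => //; apply: measurable_funB => //; exact: measurable_along.
  move=> x; have := along_le_enorm u x; rewrite -/K.
  have hinge0 : 0 <= Num.max (along u x - theta) 0 by rewrite le_max lexx orbT.
  have hinge_le : Num.max (along u x - theta) 0 <= `|along u x| + `|theta|.
    by rewrite ge_max addr_ge0 // andbT (le_trans (ler_norm _)) // ler_normB.
  by rewrite (ger0_norm hinge0) => along_le; rewrite (le_trans hinge_le) // lerD.
have int_theta : P.-integrable setT (EFin \o (fun x => theta * \1_A x)).
  exact: (eq_integrable _ _ _ _ (integrableZl measurableT theta (integrable_indic P mA))).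
have PA : fine (P A) = \int[P]_x \1_A x by rewrite /Rintegral integral_indic // setIT.
rewrite PA -RintegralZl //; last exact: integrable_indic.
rewrite -RintegralD //; apply: le_Rintegral => //.
- apply: (@integrable_mul_indic _ K) => //; first exact: measurable_along.
  exact: along_le_enorm.
- exact: (integrableD measurableT int_theta int_hinge).
- by move=> x _; rewrite indicE mul_bool_le_hinge.
Qed.

Lemma hinge_along_row (theta : R) {Q : 'M[R]_d} {i0 : 'I_d} {u : 'I_d -> R} :
  (forall j, Q i0 j = u j) ->
  (forall B, measurable B -> P ((mx_act Q \o Z) @^-1` B) = P (Z @^-1` B)) ->
  \int[P]_x Num.max (along u x - theta) 0
  = fine ('E_P[fun x => Num.max (tnth (Z x) i0 - theta) 0]).
Proof.
move=> rowQ same; rewrite unlock /Rintegral; congr fine.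
pose G (y : d.-tuple R) := (Num.max (tnth y i0 - theta) 0)%:E.
have alongE x : along u x = tnth (mx_act Q (Z x)) i0.
  by rewrite /mx_act tnth_mktuple; apply: eq_bigr => j _; rewrite rowQ.
under eq_integral do rewrite alongE.
apply: (@ge0_integral_same_distribution _ _ _ _ _ _ _ _ G) => //.
- by apply: measurableT_comp mZ; exact: measurable_mx_act.
- apply/measurable_EFinP; apply: measurable_maxr => //.
  by apply: measurable_funB => //; exact: measurable_tnth.
- by move=> y; rewrite /G lee_fin le_max lexx orbT.
Qed.

End ProjectionOnEvent.

Theorem mainTheorem13 (dT : measure_display) (T : measurableType dT)
  (R : realType) (P : probability T R) (d : nat) (hd : (0 < d)%N)
  (Z : T -> d.-tuple R) (W : T -> R)
  (mZ : measurable_fun setT Z)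
  (intZ : P.-integrable setT (fun x => (enorm (Z x))%:E))
  (invZ : forall Q : 'M[R]_d, orthogonal_mx Q ->
     forall A : set (d.-tuple R), measurable A ->
       P (Z @^-1` A) = P ((mx_act Q \o Z) @^-1` A))
  (mW : measurable_fun setT W) (discW : countable (range W))
  (w : R) (hw : (0 < P (W @^-1` [set w]))%E) (theta : R) :
  \sum_(i < d) (fine ('E_P[fun x => tnth (Z x) i * (W x == w)%:R])) ^+ 2
  <= (theta * fine (P (W @^-1` [set w]))
      + fine ('E_P[fun x => Num.max (tnth (Z x) (Ordinal hd) - theta) 0])) ^+ 2.
Proof.
set A := W @^-1` [set w].
have mA : measurable A by rewrite -[A]setTI; exact: mW.
have indE x : (W x == w)%:R = \1_A x :> R.
  rewrite indicE; have [Wx|Wx] := eqVneq (W x) w; first by rewrite mem_set.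
  by rewrite memNset //; exact/eqP.
pose v i := \int[P]_x (tnth (Z x) i * \1_A x).
have -> : \sum_(i < d) (fine ('E_P[fun x => tnth (Z x) i * (W x == w)%:R])) ^+ 2
    = \sum_i v i ^+ 2.
  by apply: eq_bigr => i _; rewrite unlock; under eq_integral do rewrite indE.
set s := Num.sqrt (\sum_i v i ^+ 2).
have s_ge0 : 0 <= s by exact: sqrtr_ge0.
rewrite -[\sum_i _]sqr_sqrtr -/s; last by apply: sumr_ge0 => i _; exact: sqr_ge0.
have [->|s_neq0] := eqVneq s 0; first by rewrite expr0n sqr_ge0.
have [unit_u inner_u] := unit_direction v s_neq0; rewrite -/s in unit_u inner_u.
have [Q [oQ rowQ]] := orthogonal_with_row (Ordinal hd) _ unit_u.
have same_law B : measurable B -> P ((mx_act Q \o Z) @^-1` B) = P (Z @^-1` B).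
  by move=> mB; rewrite (invZ Q oQ).
have s_le : s <= theta * fine (P A)
    + fine ('E_P[fun x => Num.max (tnth (Z x) (Ordinal hd) - theta) 0]).
  rewrite -inner_u -(integral_along_indic mZ mA intZ).
  rewrite -(hinge_along_row mZ theta rowQ same_law).
  exact: (integral_along_indic_le mZ mA intZ).
by rewrite lerXn2r // nnegrE (le_trans s_ge0 s_le).
Qed.
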